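(* Let $T\subset\mathbb{R}^3$ be a nondegenerate tetrahedron with vertices $\mathbf v_1,\dots,\mathbf v_4$ and faces $F_j$ opposite $\mathbf v_j$; let $\mathcal I_j(p)=\frac1{|F_j|}\int_{F_j}p\,d\mathbf x$, $j=1,\dots,4$. For $1\le i<j\le4$ let $x_{ij}(t)=(1-t)\mathbf v_i+t\mathbf v_j$, $t\in[0,1]$, let $\omega_{ij}$ be a probability density on $[0,1]$, and let $q_{ij}$ be a polynomial of degree at most 2 on $[0,1]$ with $\int_0^1 q_{ij}(t)\phi(t)\omega_{ij}(t)\,dt=0$ for every affine $\phi$. Define $\mathcal L_{ij}(p)=\int_0^1p(x_{ij}(t))\,q_{ij}(t)\,\omega_{ij}(t)\,dt$ for $p\in\mathbb{P}_2(T)$, and $\Sigma^{\mathrm{ef}}=\{\mathcal I_j:j=1,\dots,4\}\cup\{\mathcal L_{ij}:1\le i<j\le4\}$. Then the triple $(T,\mathbb{P}_2(T),\Sigma^{\mathrm{ef}})$ is unisolvent if and only if $\int_0^1t(1-t)\,q_{ij}(t)\,\omega_{ij}(t)\,dt\ne0$ for all $1\le i<j\le4$.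
   Context: $|F_j|$ is the area of $F_j$; $\mathbb{P}_2(T)$ is the space of polynomials of degree at most 2 on $T$. Unisolvent means the only $p\in\mathbb{P}_2(T)$ annihilated by all ten functionals of $\Sigma^{\mathrm{ef}}$ is $p=0$. *)

From HB Require Import structures.
From mathcomp Require Import all_boot all_order all_algebra.
From mathcomp Require Import all_classical all_reals all_analysis.
Set Implicit Arguments. Unset Strict Implicit. Unset Printing Implicit Defensive.
Import Order.TTheory GRing.Theory Num.Theory.
Import numFieldNormedType.Exports.
Local Open Scope classical_set_scope.
Local Open Scope ring_scope.

Section Defs.
Variable R : realType.

Notation leb := (@lebesgue_measure R).

Definition pt := 'rV[R]_3.

Definition nondegenerate_tet (v : 'I_4 -> pt) : Prop :=
  \det (\matrix_(k < 3, l < 3) (v (lift ord0 k) - v ord0) ord0 l) != 0.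

Definition isP2 (p : pt -> R) : Prop :=
  exists (a : R) (b : 'I_3 -> R) (c : 'I_3 -> 'I_3 -> R),
    forall x : pt, p x = a + \sum_(i < 3) b i * x ord0 i
                          + \sum_(i < 3) \sum_(j < 3) c i j * x ord0 i * x ord0 j.

(* Average (1/|F|) int_F p over the triangle F with vertices a, b, c,
   written through the affine parametrization of the reference triangle
   {(s,t) : s,t >= 0, s + t <= 1} (area 1/2; the Jacobian |F|*2 cancels
   against 1/|F|). *)
Definition tri_avg (a b c : pt) (p : pt -> R) : R :=
  2 * \int[leb]_(s in `[0, 1]%classic)
        \int[leb]_(t in `[0, 1 - s]%classic) p (a + s *: (b - a) + t *: (c - a)).

(* Face F_j opposite v_j has vertices v_(lift j k), k = 0,1,2. *)
Definition face_avg (v : 'I_4 -> pt) (j : 'I_4) (p : pt -> R) : R :=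
  tri_avg (v (lift j 0)) (v (lift j 1)) (v (lift j 2)) p.

Definition edge_pt (v : 'I_4 -> pt) (i j : 'I_4) (t : R) : pt :=
  (1 - t) *: v i + t *: v j.

Definition prob_density01 (w : R -> R) : Prop :=
  measurable_fun (`[0, 1]%classic : set R) w /\
  (forall t, t \in `[0, 1]%classic -> 0 <= w t) /\
  leb.-integrable `[0, 1]%classic (EFin \o w) /\
  \int[leb]_(t in `[0, 1]%classic) w t = 1.

Definition edge_functional (v : 'I_4 -> pt) (i j : 'I_4) (q : {poly R})
    (w : R -> R) (p : pt -> R) : R :=
  \int[leb]_(t in `[0, 1]%classic) (p (edge_pt v i j t) * q.[t] * w t).

Definition unisolvent_ef (v : 'I_4 -> pt) (q : 'I_4 -> 'I_4 -> {poly R})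
    (w : 'I_4 -> 'I_4 -> R -> R) : Prop :=
  forall p : pt -> R, isP2 p ->
    (forall j : 'I_4, face_avg v j p = 0) ->
    (forall i j : 'I_4, (i < j)%N -> edge_functional v i j (q i j) (w i j) p = 0) ->
    forall x : pt, p x = 0.

End Defs.

(* For quadratic p, orthogonality of q_ij to affine functions turns the edge
   functional into L_ij(p) = -2 K_ij (p(v_i) + p(v_j) - 2 p(m_ij)), where
   K_ij = int t(1-t) q_ij w_ij and m_ij is the midpoint of the edge; and the
   midpoint rule, exact for quadratics on triangles, turns each face average into
   the mean of p over the three edge midpoints of that face.
   If every K_ij is nonzero, the second differences vanish, so the midpoint values
   are averages of vertex values and each face condition says that p sums to zero
   over the three vertices of that face; hence all ten nodal values vanish and
   p = 0 by unisolvence of quadratic Lagrange interpolation.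
   If K_ij = 0, the quadratic 4 l_i l_j - l_i - l_j + 1/3 in barycentric
   coordinates is annihilated by all ten functionals but equals -2/3 at v_i. *)

From HB Require Import structures.
From mathcomp Require Import all_boot all_order all_algebra.
From mathcomp Require Import all_classical all_reals all_analysis.
From mathcomp Require Import ring lra.
Import Order.TTheory GRing.Theory Num.Theory.
Import numFieldNormedType.Exports.
Local Open Scope classical_set_scope.
Local Open Scope ring_scope.

Section Unisolvence.
Context {R : realType}.
Notation leb := (@lebesgue_measure R).
Notation pt := (pt R).

(** * Integrals of polynomials *)

Lemma horner_bounded_itv (P : {poly R}) (a b : R) :
  [bounded P.[x] | x in `[a, b]%classic].
Proof.
have cP : {within `[a, b]%classic, continuous (horner P)}.
  by apply: continuous_subspaceT => x; exact: continuous_horner.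
have /compact_bounded[M [_ mrt]] := continuous_compact cP (@segment_compact _ a b).
by exists M; split; rewrite ?num_real // => ? ? ? ?; exact: mrt.
Qed.

Lemma integrable_horner_mul (P : {poly R}) {w f : R -> R} :
  leb.-integrable `[0, 1]%classic (EFin \o w) ->
  (forall t, f t = P.[t] * w t) ->
  leb.-integrable `[0, 1]%classic (EFin \o f).
Proof.
move=> wi Hf.
have mP : measurable_fun (`[0, 1]%classic : set R) (horner P).
  apply/measurable_funTS; apply: measurable_realfun.continuous_measurable_fun.
  exact/continuous_horner.
have := @integrableMr _ _ _ leb _ (measurable_itv _) (horner P) _ mP
  (horner_bounded_itv P 0 1) wi.
by apply: eq_integrable => //= t _; rewrite Hf EFinM.
Qed.

Lemma Rintegral_horner (P F : {poly R}) (a b : R) : a <= b -> F^`() = P ->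
  \int[leb]_(x in `[a, b]%classic) P.[x] = F.[b] - F.[a].
Proof.
rewrite le_eqVlt => /predU1P[<- _|ab dF].
  by rewrite set_itv1 Rintegral_set1 subrr.
rewrite /Rintegral (@continuous_FTC2 _ (horner P) (horner F))//=.
- by apply: continuous_subspaceT => x; exact: continuous_horner.
- split.
  + by move=> x _; exact: derivable_horner.
  + by apply: cvg_at_right_filter; exact: continuous_horner.
  + by apply: cvg_at_left_filter; exact: continuous_horner.
- by move=> x _; rewrite -derivE dF.
Qed.

Lemma Rintegral_cubic (a b d0 d1 d2 d3 : R) : a <= b ->
  \int[leb]_(x in `[a, b]%classic) (d0 + d1 * x + d2 * x ^+ 2 + d3 * x ^+ 3) =
  (d0 * b + d1 / 2 * b ^+ 2 + d2 / 3 * b ^+ 3 + d3 / 4 * b ^+ 4) -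
  (d0 * a + d1 / 2 * a ^+ 2 + d2 / 3 * a ^+ 3 + d3 / 4 * a ^+ 4).
Proof.
move=> ab.
pose P : {poly R} := d0%:P + d1 *: 'X + d2 *: 'X^2 + d3 *: 'X^3.
pose F : {poly R} :=
  d0 *: 'X + (d1 / 2) *: 'X^2 + (d2 / 3) *: 'X^3 + (d3 / 4) *: 'X^4.
have -> : \int[leb]_(x in `[a, b]%classic) (d0 + d1 * x + d2 * x ^+ 2 + d3 * x ^+ 3)
    = \int[leb]_(x in `[a, b]%classic) P.[x].
  by apply: eq_Rintegral => x _; rewrite /P !hornerE.
rewrite (@Rintegral_horner P F) //; first by rewrite /F !hornerE.
apply/polyP => i; rewrite /F /P !poly.derivE !coefE.
by case: i => [|[|[|[|i]]]] /=; rewrite ?mulr0n ?mulr1n //; field.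
Qed.

Lemma reference_triangle_quadratic {h : R -> R -> R} {c00 c10 c01 c20 c11 c02 : R} :
  (forall s t, h s t =
     c00 + c10 * s + c01 * t + c20 * s ^+ 2 + c11 * s * t + c02 * t ^+ 2) ->
  2 * \int[leb]_(s in `[0, 1]%classic) \int[leb]_(t in `[0, 1 - s]%classic) h s t
  = c00 + (c10 + c01) / 3 + (c20 + c02) / 6 + c11 / 12.
Proof.
move=> Hh.
rewrite (@eq_Rintegral _ _ _ leb _ (fun s =>
  (c00 + c01 / 2 + c02 / 3) + (c10 - c00 + c11 / 2 - c01 - c02) * s
  + (c20 - c10 + c01 / 2 - c11 + c02) * s ^+ 2
  + (- c20 + c11 / 2 - c02 / 3) * s ^+ 3)).
  by rewrite Rintegral_cubic ?ler01 //; field.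
move=> s; rewrite inE /= in_itv /= => /andP[_ s1].
rewrite (@eq_Rintegral _ _ _ leb _ (fun t => (c00 + c10 * s + c20 * s ^+ 2)
   + (c01 + c11 * s) * t + c02 * t ^+ 2 + 0 * t ^+ 3)).
  by rewrite Rintegral_cubic ?subr_ge0 //; field.
by move=> t _; rewrite Hh; ring.
Qed.

(* Orthogonality to affine functions leaves only the [t (1 - t)] component. *)
Lemma weighted_moment_quadratic {g : R -> R} {c0 c1 c2 : R} {q : {poly R}}
    {w : R -> R} :
  leb.-integrable `[0, 1]%classic (EFin \o w) ->
  (forall a b : R, \int[leb]_(t in `[0, 1]%classic) (q.[t] * (a + b * t) * w t) = 0) ->
  (forall t, g t = c0 + c1 * t + c2 * t ^+ 2) ->
  \int[leb]_(t in `[0, 1]%classic) (g t * q.[t] * w t) =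
  - c2 * \int[leb]_(t in `[0, 1]%classic) (t * (1 - t) * q.[t] * w t).
Proof.
move=> wi q_orth Hg.
rewrite (@eq_Rintegral _ _ _ leb _ (fun t => q.[t] * (c0 + (c1 + c2) * t) * w t
   - c2 * (t * (1 - t) * q.[t] * w t))); last by move=> t _; rewrite Hg; ring.
have iK : leb.-integrable `[0, 1]%classic
    (EFin \o (fun t => t * (1 - t) * q.[t] * w t)).
  by apply: (integrable_horner_mul ('X * (1 - 'X) * q) wi) => t; rewrite !hornerE.
rewrite RintegralB //; first by rewrite q_orth RintegralZl // sub0r mulNr.
- by apply: (integrable_horner_mul (q * (c0%:P + (c1 + c2) *: 'X)) wi) => t;
    rewrite !hornerE.
- by apply: (integrable_horner_mul (c2%:P * ('X * (1 - 'X) * q)) wi) => t;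
    rewrite !hornerE.
Qed.

(** * Quadratic polynomials on R^3 *)

Definition isP1 (f : pt -> R) : Prop :=
  exists (a : R) (b : 'I_3 -> R), forall x : pt, f x = a + \sum_(i < 3) b i * x ord0 i.

Lemma sum3 (F : 'I_3 -> R) : \sum_(i < 3) F i = F 0 + F 1 + F 2.
Proof. by rewrite !big_ord_recr big_ord0 /= add0r; congr (F _ + F _ + F _); exact/val_inj. Qed.

Lemma isP1_isP2 {f : pt -> R} : isP1 f -> isP2 f.
Proof. by move=> [a [b Hf]]; exists a, b, (fun _ _ => 0) => x; rewrite Hf !sum3; ring. Qed.

Lemma isP2_const (k : R) : isP2 (fun _ : pt => k).
Proof. by exists k, (fun _ => 0), (fun _ _ => 0) => x; rewrite !sum3; ring. Qed.

Lemma isP2_add {f g : pt -> R} : isP2 f -> isP2 g -> isP2 (fun x => f x + g x).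
Proof.
move=> [a [b [c Hf]]] [a' [b' [c' Hg]]].
exists (a + a'), (fun i => b i + b' i), (fun i j => c i j + c' i j) => x.
by rewrite Hf Hg !sum3; ring.
Qed.

Lemma isP2_scale (k : R) {f : pt -> R} : isP2 f -> isP2 (fun x => k * f x).
Proof.
move=> [a [b [c Hf]]].
exists (k * a), (fun i => k * b i), (fun i j => k * c i j) => x.
by rewrite Hf !sum3; ring.
Qed.

Lemma isP2_P1_mul {f g : pt -> R} : isP1 f -> isP1 g -> isP2 (fun x => f x * g x).
Proof.
move=> [a [b Hf]] [a' [b' Hg]].
exists (a * a'), (fun i => a * b' i + a' * b i), (fun i j => b i * b' j) => x.
by rewrite Hf Hg !sum3; ring.
Qed.

Lemma isP2_ext {f g : pt -> R} : isP2 f -> f =1 g -> isP2 g.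
Proof. by move=> P2f /funext <-. Qed.

Lemma isP2_sum {n} {F : 'I_n -> pt -> R} :
  (forall i, isP2 (F i)) -> isP2 (fun x => \sum_(i < n) F i x).
Proof.
elim: n F => [|n IH] F HF.
  by apply: (isP2_ext (isP2_const 0)) => x; rewrite big_ord0.
apply: (isP2_ext (isP2_add (IH (fun i => F (widen_ord (leqnSn n) i)) (fun i => HF _)) (HF ord_max))).
by move=> x; rewrite big_ord_recr.
Qed.

Lemma isP1_affine_coord (x0 : pt) (M : 'M[R]_3) (i : 'I_3) :
  isP1 (fun y : pt => (x0 + y *m M) ord0 i).
Proof.
exists (x0 ord0 i), (fun k => M k i) => y.
by rewrite !mxE; congr (_ + _); apply: eq_bigr => k _; rewrite mulrC.
Qed.

Lemma isP1_comp_affine {f : pt -> R} (x0 : pt) (M : 'M[R]_3) :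
  isP1 f -> isP1 (fun y => f (x0 + y *m M)).
Proof.
move=> [a [b Hf]].
exists (a + \sum_(i < 3) b i * x0 ord0 i), (fun k => \sum_(i < 3) b i * M k i) => y.
by rewrite Hf !sum3 !mxE !sum3; ring.
Qed.

Lemma isP2_comp_affine {p : pt -> R} (x0 : pt) (M : 'M[R]_3) :
  isP2 p -> isP2 (fun y => p (x0 + y *m M)).
Proof.
move=> [a [b [c Hp]]].
apply: (isP2_ext (isP2_add (isP2_add (isP2_const a)
  (isP2_sum (fun i => isP2_scale (b i) (isP1_isP2 (isP1_affine_coord x0 M i)))))
  (isP2_sum (fun i => isP2_sum (fun j => isP2_scale (c i j)
     (isP2_P1_mul (isP1_affine_coord x0 M i) (isP1_affine_coord x0 M j))))))).
by move=> y; rewrite Hp; congr (_ + _); apply: eq_bigr => i _;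
  apply: eq_bigr => j _; rewrite mulrA.
Qed.

Lemma isP2_on_plane {p : pt -> R} (x u w : pt) : isP2 p ->
  exists c00 c10 c01 c20 c11 c02 : R, forall s t : R,
    p (x + s *: u + t *: w) =
    c00 + c10 * s + c01 * t + c20 * s ^+ 2 + c11 * s * t + c02 * t ^+ 2.
Proof.
move=> [a [b [c Hp]]].
pose lin (y : pt) := \sum_(i < 3) b i * y ord0 i.
pose bil (y z : pt) := \sum_(i < 3) \sum_(j < 3) c i j * (y ord0 i * z ord0 j).
exists (p x), (lin u + bil x u + bil u x), (lin w + bil x w + bil w x).
exists (bil u u), (bil u w + bil w u), (bil w w).
by move=> s t; rewrite !Hp /lin /bil !sum3 !mxE; ring.
Qed.

Definition mid (a b : pt) : pt := (1 / 2 : R) *: (a + b).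

Definition second_diff (p : pt -> R) (a b : pt) : R := p a + p b - 2 * p (mid a b).

Lemma isP1_mid {f : pt -> R} (a b : pt) : isP1 f -> f (mid a b) = (f a + f b) / 2.
Proof. by move=> [c [d Hf]]; rewrite !Hf !sum3 !mxE; field. Qed.

Lemma tri_avg_P2 (p : pt -> R) (a b c : pt) : isP2 p ->
  tri_avg a b c p = (p (mid a b) + p (mid b c) + p (mid a c)) / 3.
Proof.
move=> P2p; have [c00 [c10 [c01 [c20 [c11 [c02 H]]]]]] := isP2_on_plane a (b - a) (c - a) P2p.
rewrite /tri_avg (reference_triangle_quadratic H).
have at_st s t : a + s *: (b - a) + t *: (c - a) = (1 - s - t) *: a + s *: b + t *: c.
  by apply/rowP => l; rewrite !mxE; ring.
have -> : mid a b = a + (1 / 2 : R) *: (b - a) + 0 *: (c - a).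
  by rewrite at_st; apply/rowP => l; rewrite !mxE; field.
have -> : mid b c = a + (1 / 2 : R) *: (b - a) + (1 / 2 : R) *: (c - a).
  by rewrite at_st; apply/rowP => l; rewrite !mxE; field.
have -> : mid a c = a + 0 *: (b - a) + (1 / 2 : R) *: (c - a).
  by rewrite at_st; apply/rowP => l; rewrite !mxE; field.
by rewrite !H; field.
Qed.

Lemma face_avg_P2 (v : 'I_4 -> pt) (m : 'I_4) (p : pt -> R) : isP2 p ->
  face_avg v m p = (p (mid (v (lift m 0)) (v (lift m 1)))
    + p (mid (v (lift m 1)) (v (lift m 2))) + p (mid (v (lift m 0)) (v (lift m 2)))) / 3.
Proof. exact: tri_avg_P2. Qed.

Lemma edge_functional_P2 (v : 'I_4 -> pt) (i j : 'I_4) (q : {poly R}) (w : R -> R)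
    (p : pt -> R) :
  isP2 p -> leb.-integrable `[0, 1]%classic (EFin \o w) ->
  (forall a b : R, \int[leb]_(t in `[0, 1]%classic) (q.[t] * (a + b * t) * w t) = 0) ->
  edge_functional v i j q w p =
  - 2 * \int[leb]_(t in `[0, 1]%classic) (t * (1 - t) * q.[t] * w t)
      * second_diff p (v i) (v j).
Proof.
move=> P2p wi q_orth.
have [c0 [c1 [c01 [c2 [c11 [c02 H]]]]]] := isP2_on_plane (v i) (v j - v i) 0 P2p.
have on_edge t : p (v i + t *: (v j - v i)) = c0 + c1 * t + c2 * t ^+ 2.
  by have := H t 0; rewrite scaler0 addr0 => ->; ring.
rewrite /edge_functional (@weighted_moment_quadratic (fun t => p (edge_pt v i j t))
  c0 c1 c2 q w wi q_orth); last first.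
  by move=> t; rewrite -on_edge /edge_pt; congr p; apply/rowP => l; rewrite !mxE; ring.
rewrite /second_diff; have -> : mid (v i) (v j) = v i + (1 / 2) *: (v j - v i).
  by apply/rowP => l; rewrite !mxE; field.
have p_vi : p (v i) = c0 by have := on_edge 0; rewrite scale0r addr0 => ->; ring.
have p_vj : p (v j) = c0 + c1 + c2.
  by have := on_edge 1; rewrite scale1r addrC subrK => ->; ring.
by rewrite on_edge p_vi p_vj; field.
Qed.

(** * Quadratic interpolation on a tetrahedron *)

Lemma eq0_of_sum_lift_eq0 {K : numDomainType} {n} (F : 'I_n.+2 -> K) :
  (forall m : 'I_n.+2, \sum_(k < n.+1) F (lift m k) = 0) -> forall m, F m = 0.
Proof.
move=> F_lift.
have F_total m : F m = \sum_i F i by rewrite (bigD1_ord m) //= F_lift addr0.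
have total0 : \sum_i F i = 0.
  set S := \sum_i F i.
  have : S = \sum_(i < n.+2) S by apply: eq_bigr => i _; exact: F_total.
  rewrite sumr_const card_ord mulrS -{1}[S]addr0 => /addrI/esym/eqP.
  by rewrite mulrn_eq0 => /eqP.
by move=> m; rewrite F_total.
Qed.

Definition edge_matrix (v : 'I_4 -> pt) : 'M[R]_3 :=
  \matrix_(k < 3, l < 3) (v (lift ord0 k) - v ord0) ord0 l.

Lemma edge_matrix_unit v : nondegenerate_tet v -> edge_matrix v \in unitmx.
Proof. by rewrite unitmxE unitfE. Qed.

(* The reference tetrahedron: vertex [ord0] is the origin and vertex [lift ord0 k] is ['e_k]. *)
Definition ref_vertex (n : 'I_4) : pt := \row_k (n == lift ord0 k)%:R.

Lemma vertex_ref (v : 'I_4 -> pt) (n : 'I_4) :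
  v n = v ord0 + ref_vertex n *m edge_matrix v.
Proof.
case: (unliftP ord0 n) => [k ->|->].
  have -> : ref_vertex (lift ord0 k) = 'e_k.
    by apply/rowP => l; rewrite !mxE (inj_eq lift_inj) eqxx eq_sym.
  by rewrite -rowE; apply/rowP => l; rewrite !mxE addrC subrK.
have -> : ref_vertex ord0 = 0.
  by apply/rowP => l; rewrite !mxE (negbTE (neq_lift _ _)).
by rewrite mul0mx addr0.
Qed.

Lemma mid_affine (x0 y z : pt) (M : 'M[R]_3) :
  mid (x0 + y *m M) (x0 + z *m M) = x0 + mid y z *m M.
Proof. by rewrite /mid -scalemxAl mulmxDl; apply/rowP => l; rewrite !mxE; field. Qed.

Lemma P2_eq0_at_ref_nodes (g : pt -> R) : isP2 g ->
  (forall n, g (ref_vertex n) = 0) ->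
  (forall a b : 'I_4, (a < b)%N -> g (mid (ref_vertex a) (ref_vertex b)) = 0) ->
  forall y, g y = 0.
Proof.
move=> [a [b [c Hg]]] g_vert g_mid y.
have := g_vert ord0; have := g_vert (lift ord0 0);
have := g_vert (lift ord0 1); have := g_vert (lift ord0 2).
have := g_mid ord0 (lift ord0 0) isT; have := g_mid ord0 (lift ord0 1) isT;
have := g_mid ord0 (lift ord0 2) isT; have := g_mid (lift ord0 0) (lift ord0 1) isT;
have := g_mid (lift ord0 0) (lift ord0 2) isT; have := g_mid (lift ord0 1) (lift ord0 2) isT.
rewrite !Hg !sum3 !mxE /= => m23 m13 m12 m03 m02 m01 n3 n2 n1 n0.
(* [c] need not be symmetric: only [c i j + c j i] is determined. *)
have a0 : a = 0 by lra.
have b0 : b 0 = 0 by lra.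
have b1 : b 1 = 0 by lra.
have b2 : b 2 = 0 by lra.
have c00 : c 0 0 = 0 by lra.
have c11 : c 1 1 = 0 by lra.
have c22 : c 2 2 = 0 by lra.
have c10 : c 1 0 = - c 0 1 by lra.
have c20 : c 2 0 = - c 0 2 by lra.
have c21 : c 2 1 = - c 1 2 by lra.
by rewrite a0 b0 b1 b2 c00 c11 c22 c10 c20 c21; ring.
Qed.

Lemma P2_eq0_at_nodes {v : 'I_4 -> pt} {p : pt -> R} :
  nondegenerate_tet v -> isP2 p ->
  (forall n, p (v n) = 0) ->
  (forall a b : 'I_4, (a < b)%N -> p (mid (v a) (v b)) = 0) ->
  forall x, p x = 0.
Proof.
move=> nd P2p p_vert p_mid x.
pose E := edge_matrix v.
have -> : x = v ord0 + ((x - v ord0) *m invmx E) *m E.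
  by rewrite mulmxKV ?edge_matrix_unit // addrC subrK.
apply: (@P2_eq0_at_ref_nodes (fun y => p (v ord0 + y *m E))) => [|n|a b ab].
- exact: isP2_comp_affine.
- by rewrite -vertex_ref.
- by rewrite -mid_affine -!vertex_ref p_mid.
Qed.

Lemma P2_eq0_of_second_diff_face_avg {v : 'I_4 -> pt} {p : pt -> R} :
  nondegenerate_tet v -> isP2 p ->
  (forall a b : 'I_4, (a < b)%N -> second_diff p (v a) (v b) = 0) ->
  (forall m, face_avg v m p = 0) ->
  forall x, p x = 0.
Proof.
move=> nd P2p p_sd p_face.
have mid_avg_lt (a b : 'I_4) : (a < b)%N -> p (mid (v a) (v b)) = (p (v a) + p (v b)) / 2.
  by move=> ab; have := p_sd a b ab; rewrite /second_diff; lra.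
have mid_avg (a b : 'I_4) : a != b -> p (mid (v a) (v b)) = (p (v a) + p (v b)) / 2.
  move=> neq_ab; case: (ltngtP a b) => [ab|ba|/val_inj eq_ab]; first exact: mid_avg_lt.
    by rewrite /mid addrC mid_avg_lt // addrC.
  by rewrite eq_ab eqxx in neq_ab.
have p_vert n : p (v n) = 0.
  apply: (eq0_of_sum_lift_eq0 (fun m => p (v m))) => m; have := p_face m.
  by rewrite face_avg_P2 // !mid_avg ?(inj_eq lift_inj) // sum3; lra.
apply: (P2_eq0_at_nodes nd P2p p_vert) => a b ab.
by rewrite mid_avg_lt // !p_vert; lra.
Qed.

(** * Barycentric coordinates and the edge bubble *)

Definition bary_ref (m : 'I_4) (y : pt) : R :=
  if unlift ord0 m is Some k then y ord0 k else 1 - \sum_(k < 3) y ord0 k.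

Lemma bary_ref_vertex (m n : 'I_4) : bary_ref m (ref_vertex n) = (m == n)%:R.
Proof.
rewrite /bary_ref; case: (unliftP ord0 m) => [k ->|->]; first by rewrite mxE eq_sym.
under eq_bigr do rewrite mxE.
case: (unliftP ord0 n) => [k ->|->].
  rewrite (bigD1 k) //= eqxx big1 ?addr0 ?subrr ?(negbTE (neq_lift _ _)) //.
  by move=> l; rewrite (inj_eq lift_inj) eq_sym => /negbTE ->.
by rewrite big1 ?subr0 ?eqxx // => l _; rewrite (negbTE (neq_lift _ _)).
Qed.

Lemma isP1_bary_ref (m : 'I_4) : isP1 (bary_ref m).
Proof.
rewrite /bary_ref; case: (unlift ord0 m) => [k|].
  exists 0, (fun i => (i == k)%:R) => y.
  rewrite add0r (bigD1 k) //= eqxx mul1r big1 ?addr0 // => i /negbTE ->.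
  by rewrite mul0r.
by exists 1, (fun _ => -1) => y; rewrite !sum3; ring.
Qed.

Definition bary (v : 'I_4 -> pt) (m : 'I_4) (x : pt) : R :=
  bary_ref m ((x - v ord0) *m invmx (edge_matrix v)).

Lemma isP1_bary v m : isP1 (bary v m).
Proof.
have := isP1_comp_affine (- (v ord0 *m invmx (edge_matrix v))) (invmx (edge_matrix v))
  (isP1_bary_ref m).
by congr isP1; apply/funext => x; rewrite /bary mulmxBl addrC.
Qed.

Lemma bary_vertex v (m n : 'I_4) : nondegenerate_tet v -> bary v m (v n) = (m == n)%:R.
Proof.
move=> nd; rewrite /bary (vertex_ref v n) addrAC subrr add0r.
by rewrite mulmxK ?edge_matrix_unit // bary_ref_vertex.
Qed.

(* [4 l_i l_j] vanishes at the vertices and has a nonzero second difference only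
   along the edge [ij]; the affine correction makes all face averages vanish. *)
Definition edge_bubble (v : 'I_4 -> pt) (i j : 'I_4) (x : pt) : R :=
  4 * (bary v i x * bary v j x) - bary v i x - bary v j x + 1 / 3.

Lemma isP2_edge_bubble v i j : isP2 (edge_bubble v i j).
Proof.
apply: (isP2_ext (isP2_add (isP2_add (isP2_add
  (isP2_scale 4 (isP2_P1_mul (isP1_bary v i) (isP1_bary v j)))
  (isP2_scale (-1) (isP1_isP2 (isP1_bary v i))))
  (isP2_scale (-1) (isP1_isP2 (isP1_bary v j)))) (isP2_const (1 / 3)))).
by move=> x; rewrite /edge_bubble; ring.
Qed.

Lemma edge_bubble_vertex v (i j n : 'I_4) : nondegenerate_tet v ->
  edge_bubble v i j (v n) =
  4 * ((i == n)%:R * (j == n)%:R) - (i == n)%:R - (j == n)%:R + 1 / 3.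
Proof. by move=> nd; rewrite /edge_bubble !bary_vertex. Qed.

Lemma edge_bubble_mid v (i j a b : 'I_4) : nondegenerate_tet v ->
  edge_bubble v i j (mid (v a) (v b)) =
  ((i == a)%:R + (i == b)%:R) * ((j == a)%:R + (j == b)%:R)
  - ((i == a)%:R + (i == b)%:R + (j == a)%:R + (j == b)%:R) / 2 + 1 / 3.
Proof.
move=> nd; rewrite /edge_bubble (isP1_mid _ _ (isP1_bary v i)).
by rewrite (isP1_mid _ _ (isP1_bary v j)) !bary_vertex //; field.
Qed.

Lemma edge_bubble_face_avg v (i j m : 'I_4) : nondegenerate_tet v -> (i < j)%N ->
  face_avg v m (edge_bubble v i j) = 0.
Proof.
move=> nd; rewrite face_avg_P2; last exact: isP2_edge_bubble.
rewrite !edge_bubble_mid //.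
by case: m i j => [[|[|[|[|//]]]] ?] [[|[|[|[|//]]]] ?] [[|[|[|[|//]]]] ?] //= _; field.
Qed.

Lemma edge_bubble_second_diff v (i j a b : 'I_4) : nondegenerate_tet v ->
  (a < b)%N -> (i < j)%N -> (a != i) || (b != j) ->
  second_diff (edge_bubble v i j) (v a) (v b) = 0.
Proof.
move=> nd; rewrite /second_diff !edge_bubble_vertex // edge_bubble_mid //.
by case: a b i j => [[|[|[|[|//]]]] ?] [[|[|[|[|//]]]] ?] [[|[|[|[|//]]]] ?]
  [[|[|[|[|//]]]] ?] //= _ _ _; field.
Qed.

Lemma edge_bubble_vertex_neq0 v (i j : 'I_4) : nondegenerate_tet v -> i != j ->
  edge_bubble v i j (v i) != 0.
Proof.
move=> nd ij; rewrite edge_bubble_vertex // eqxx [j == i]eq_sym (negbTE ij) /=.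
by apply/negP => /eqP; lra.
Qed.

End Unisolvence.

Theorem theorem4 (R : realType) (v : 'I_4 -> 'rV[R]_3)
    (w : 'I_4 -> 'I_4 -> R -> R) (q : 'I_4 -> 'I_4 -> {poly R}) :
  nondegenerate_tet v ->
  (forall i j : 'I_4, (i < j)%N -> prob_density01 (w i j)) ->
  (forall i j : 'I_4, (i < j)%N -> (size (q i j) <= 3)%N) ->
  (forall i j : 'I_4, (i < j)%N -> forall a b : R,
      \int[@lebesgue_measure R]_(t in `[0, 1]%classic)
         ((q i j).[t] * (a + b * t) * w i j t) = 0) ->
  (unisolvent_ef v q w <->
   (forall i j : 'I_4, (i < j)%N ->
      \int[@lebesgue_measure R]_(t in `[0, 1]%classic)
         (t * (1 - t) * (q i j).[t] * w i j t) != 0)).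
Proof.
move=> nd w_dens _ q_orth.
have edgeE (i j : 'I_4) (p : pt R -> R) : (i < j)%N -> isP2 p ->
    edge_functional v i j (q i j) (w i j) p = - 2 * \int[lebesgue_measure]_(t in `[0, 1]%classic)
      (t * (1 - t) * (q i j).[t] * w i j t) * second_diff p (v i) (v j).
  move=> ij P2p; have [_ [_ [wi _]]] := w_dens i j ij.
  exact: edge_functional_P2 P2p wi (q_orth i j ij).
split=> [uni i j ij | K_neq0 p P2p p_face p_edge].
  apply/eqP => K0; have /negP[] : edge_bubble v i j (v i) != 0.
    by apply: edge_bubble_vertex_neq0 => //; apply: contraTneq ij => ->; rewrite ltnn.
  apply/eqP; apply: uni => [|m|a b ab]; first exact: isP2_edge_bubble.
    exact: edge_bubble_face_avg.
  rewrite (edgeE _ _ _ ab (isP2_edge_bubble v i j)).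
  have [/andP[/eqP -> /eqP ->]|abij] := boolP ((a == i) && (b == j)).
    by rewrite K0 mulr0 mul0r.
  by rewrite edge_bubble_second_diff ?mulr0 // -negb_and.
apply: (P2_eq0_of_second_diff_face_avg nd P2p) => // a b ab.
have /eqP := p_edge a b ab; rewrite edgeE // !mulf_eq0 (negbTE (K_neq0 a b ab)) orbF.
by case/orP => /eqP //; lra.
Qed.
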